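(* For each integer $n\ge3$ there exist finite rooted binary trees $T_1,T_2$, each with $n$ nodes, such that the right-arm rotation distance between them satisfies $d_{RA}(T_1,T_2)=2n-2$.
   Context: Trees: finite rooted binary trees, each internal vertex (node) having a left and a right child. The right arm consists of the root and all nodes reachable from the root by a path of right edges. Right rotation at a node $N$ whose left child $M$ is a node (with $A,B$ the left and right subtrees of $M$, $C$ the right subtree of $N$) replaces the subtree at $N$ by one whose root has left subtree $A$ and right child a node with left subtree $B$ and right subtree $C$; left rotation at $N$ is the inverse operation. The right-arm rotation distance $d_{RA}(T_1,T_2)$ is the minimal number of rotations, each performed at a node on the right arm, needed to transform $T_1$ into $T_2$. *)

From Stdlib Require Import Arith Lia.

(* Finite rooted binary trees: a [Node] is an internal vertex with a left and
   a right child; [Leaf] is an external (empty) position. *)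
Inductive tree : Type :=
| Leaf : tree
| Node : tree -> tree -> tree.

Fixpoint nodes (t : tree) : nat :=
  match t with
  | Leaf => 0
  | Node l r => nodes l + nodes r + 1
  end.

Inductive rot_right_root : tree -> tree -> Prop :=
| RRR : forall A B C, rot_right_root (Node (Node A B) C) (Node A (Node B C)).

(* One rotation (right rotation or its inverse, the left rotation) performed
   at a node on the right arm: either at the root, or at a node of the right
   arm of the root's right subtree. *)
Inductive ra_step : tree -> tree -> Prop :=
| ra_right_root : forall t t', rot_right_root t t' -> ra_step t t'
| ra_left_root  : forall t t', rot_right_root t' t -> ra_step t t'
| ra_down : forall l r r', ra_step r r' -> ra_step (Node l r) (Node l r').

Inductive ra_steps : nat -> tree -> tree -> Prop :=
| ra_refl : forall t, ra_steps 0 t t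
| ra_cons : forall k t u v, ra_step t u -> ra_steps k u v -> ra_steps (S k) t v.

Definition ra_dist (t1 t2 : tree) (d : nat) : Prop :=
  ra_steps d t1 t2 /\ (forall k, ra_steps k t1 t2 -> d <= k).

(* Every right-arm rotation changes the length of the right arm by one, and
   it changes the length of the right arm of the left subtree hanging from the
   last arm node by at most one, in the opposite direction when it does so.
   Hence the potential [arm length + 2 * (arm length of that last left
   subtree)] grows by at most one per rotation.  The tree whose root has a left
   chain of n - 1 nodes as left subtree has potential 3, but its only possible
   rotation leads to potential 2; the tree whose root has a right chain of
   n - 1 nodes as left subtree has potential 2n - 1.  This gives 2n - 2 as a
   lower bound, and n - 1 right rotations at the root followed by n - 1 left
   rotations down the arm achieve it. *)
From Stdlib Require Import Arith Lia.

Fixpoint arm_length (t : tree) : nat :=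
  match t with
  | Leaf => 0
  | Node _ r => S (arm_length r)
  end.

Fixpoint last_left (t : tree) : tree :=
  match t with
  | Leaf => Leaf
  | Node l Leaf => l
  | Node _ r => last_left r
  end.

Definition potential (t : tree) : nat :=
  arm_length t + 2 * arm_length (last_left t).

Fixpoint left_chain (m : nat) : tree :=
  match m with
  | 0 => Leaf
  | S m => Node (left_chain m) Leaf
  end.

Fixpoint right_chain (m : nat) : tree :=
  match m with
  | 0 => Leaf
  | S m => Node Leaf (right_chain m)
  end.

Lemma nodes_left_chain (m : nat) : nodes (left_chain m) = m.
Proof. induction m; simpl; lia. Qed.

Lemma nodes_right_chain (m : nat) : nodes (right_chain m) = m.
Proof. induction m; simpl; lia. Qed.

Lemma arm_length_right_chain (m : nat) : arm_length (right_chain m) = m.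
Proof. induction m; simpl; lia. Qed.

Lemma ra_steps_trans (a b : nat) (t u v : tree) :
  ra_steps a t u -> ra_steps b u v -> ra_steps (a + b) t v.
Proof.
  intros Htu Huv; induction Htu as [|a t w u Htw _ IH]; simpl; auto.
  eapply ra_cons; eauto.
Qed.

Lemma ra_steps_snoc (k : nat) (t u v : tree) :
  ra_steps k t u -> ra_step u v -> ra_steps (S k) t v.
Proof.
  intros Htu Huv; rewrite <- Nat.add_1_r.
  apply (ra_steps_trans _ _ _ _ _ Htu), (ra_cons _ _ _ _ Huv), ra_refl.
Qed.

Lemma ra_steps_down (k : nat) (l r r' : tree) :
  ra_steps k r r' -> ra_steps k (Node l r) (Node l r').
Proof.
  induction 1 as [|k r u r' Hru _ IH].
  - apply ra_refl.
  - exact (ra_cons _ _ _ _ (ra_down _ _ _ Hru) IH).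
Qed.

Lemma ra_step_not_leaf (t t' : tree) : ra_step t t' -> t <> Leaf /\ t' <> Leaf.
Proof.
  intros H; destruct H as [t t' H | t t' H | l r r' H];
    try destruct H; split; discriminate.
Qed.

Lemma ra_step_node_leaf (A B u : tree) :
  ra_step (Node (Node A B) Leaf) u -> u = Node A (Node B Leaf).
Proof.
  intros H; inversion H as [t t' Hrot | t t' Hrot | l r r' Hr]; subst.
  - inversion Hrot; reflexivity.
  - inversion Hrot.
  - destruct (ra_step_not_leaf _ _ Hr) as [[] _]; reflexivity.
Qed.

Lemma potential_node_node (l a b : tree) :
  potential (Node l (Node a b)) = S (potential (Node a b)).
Proof. reflexivity. Qed.

Lemma potential_step (t t' : tree) : ra_step t t' -> potential t' <= S (potential t).
Proof.
  induction 1 as [t t' H | t t' H | l r r' H IH].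
  - destruct H as [A B []]; unfold potential; simpl; lia.
  - destruct H as [A B []]; unfold potential; simpl; lia.
  - destruct (ra_step_not_leaf _ _ H) as [Hr Hr'].
    destruct r as [|a b]; [now destruct Hr|].
    destruct r' as [|a' b']; [now destruct Hr'|].
    rewrite !potential_node_node; lia.
Qed.

Lemma potential_steps (k : nat) (t u : tree) :
  ra_steps k t u -> potential u <= potential t + k.
Proof.
  induction 1 as [|k t w u Htw _ IH]; [lia|].
  pose proof (potential_step _ _ Htw); lia.
Qed.

Lemma rotate_left_chain (j i : nat) :
  ra_steps j (Node (left_chain j) (right_chain i)) (right_chain (S (j + i))).
Proof.
  revert i; induction j as [|j IH]; intros i; [apply ra_refl|].
  apply (ra_cons _ _ (Node (left_chain j) (right_chain (S i)))).
  - apply ra_right_root; constructor.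
  - rewrite Nat.add_succ_comm; apply IH.
Qed.

Lemma left_chain_to_right_chain (m : nat) :
  ra_steps m (Node (left_chain m) Leaf) (right_chain (S m)).
Proof.
  pose proof (rotate_left_chain m 0) as H; rewrite Nat.add_0_r in H; exact H.
Qed.

Lemma right_chain_to_left_subtree (m : nat) :
  ra_steps m (right_chain (S m)) (Node (right_chain m) Leaf).
Proof.
  induction m as [|m IH]; [apply ra_refl|].
  apply (ra_steps_snoc _ _ (Node Leaf (Node (right_chain m) Leaf))).
  - exact (ra_steps_down _ Leaf _ _ IH).
  - apply ra_left_root; constructor.
Qed.

Lemma left_to_right_subtree_steps (m : nat) :
  ra_steps (m + m) (Node (left_chain m) Leaf) (Node (right_chain m) Leaf).
Proof.
  exact (ra_steps_trans _ _ _ _ _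
           (left_chain_to_right_chain m) (right_chain_to_left_subtree m)).
Qed.

Lemma left_to_right_subtree_lower_bound (m k : nat) : 2 <= m ->
  ra_steps k (Node (left_chain m) Leaf) (Node (right_chain m) Leaf) -> 2 * m <= k.
Proof.
  intros Hm H; destruct m as [|[|m]]; [lia|lia|].
  (* [inversion] discards [k = 0], the two trees being distinct. *)
  inversion H as [| k' t u v Hstep Hrest]; subst.
  apply ra_step_node_leaf in Hstep; subst.
  apply potential_steps in Hrest.
  unfold potential in Hrest; simpl in Hrest.
  rewrite arm_length_right_chain in Hrest; lia.
Qed.

Theorem theorem4p1 : forall n : nat, 3 <= n ->
  exists T1 T2 : tree, nodes T1 = n /\ nodes T2 = n /\ ra_dist T1 T2 (2 * n - 2).
Proof.
  intros n Hn; destruct n as [|m]; [lia|].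
  exists (Node (left_chain m) Leaf), (Node (right_chain m) Leaf).
  replace (2 * S m - 2) with (m + m) by lia.
  cbn [nodes]; rewrite nodes_left_chain, nodes_right_chain.
  repeat split; [lia | lia | apply left_to_right_subtree_steps |].
  intros k Hk.
  assert (Hlow : 2 * m <= k) by (apply left_to_right_subtree_lower_bound; [lia | exact Hk]).
  lia.
Qed.
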